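(* Let $X$ be a $T_1$ topological space. The following are equivalent: (i) $X$ is finite; (ii) every proper ideal of $C_c(X)_F$ (respectively of $C_c^*(X)_F$) is fixed; (iii) every maximal ideal of $C_c(X)_F$ (respectively of $C_c^*(X)_F$) is fixed; (iv) every $(\mathcal{Z}_c)_F$-filter on $X$ is fixed; (v) every $(\mathcal{Z}_c)_F$-ultrafilter on $X$ is fixed.
   Context: $C_c(X)_F$ denotes the set of all functions $f:X\to\mathbb{R}$ whose range $f(X)$ is countable and whose set of points of discontinuity is finite; $C_c^*(X)_F$ is its subring of bounded functions. $Z(f)=\{x:f(x)=0\}$ and $Z[C_c(X)_F]=\{Z(f):f\in C_c(X)_F\}$. An ideal $I$ is fixed if $\bigcap_{f\in I}Z(f)\neq\emptyset$. A $(\mathcal{Z}_c)_F$-filter on $X$ is a nonempty family $\mathcal{F}\subseteq Z[C_c(X)_F]$ with $\emptyset\notin\mathcal{F}$, closed under finite intersections, and such that $Z\in\mathcal{F}$, $Z'\in Z[C_c(X)_F]$, $Z\subseteq Z'$ imply $Z'\in\mathcal{F}$; a $(\mathcal{Z}_c)_F$-ultrafilter is a maximal $(\mathcal{Z}_c)_F$-filter. A filter $\mathcal{F}$ is fixed if $\bigcap\mathcal{F}\neq\emptyset$. *)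

From HB Require Import structures.
From mathcomp Require Import all_boot all_order all_algebra.
From mathcomp Require Import all_classical all_reals all_analysis.
Set Implicit Arguments. Unset Strict Implicit. Unset Printing Implicit Defensive.
Import Order.TTheory GRing.Theory Num.Theory.
Import numFieldNormedType.Exports.
Local Open Scope classical_set_scope.
Local Open Scope ring_scope.

Section CcF.
Context {X : topologicalType} {R : realType}.

Definition discont (f : X -> R) : set X := [set x | ~ {for x, continuous f}].

Definition CcF : set (X -> R) :=
  [set f | countable (range f) /\ finite_set (discont f)].

Definition CcF_star : set (X -> R) :=
  [set f | CcF f /\ exists M : R, forall x, `|f x| <= M].

Definition zero_set (f : X -> R) : set X := [set x | f x = 0].

Definition fn_ideal (S : set (X -> R)) (I : set (X -> R)) : Prop :=
  [/\ I `<=` S, I (fun=> 0),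
      (forall f g, I f -> I g -> I (f \+ g)),
      (forall f, I f -> I (fun x => - f x)) &
      (forall f g, S g -> I f -> I (g \* f))].

Definition fn_proper_ideal (S I : set (X -> R)) : Prop :=
  fn_ideal S I /\ ~ I (fun=> 1).

Definition fn_maximal_ideal (S I : set (X -> R)) : Prop :=
  fn_proper_ideal S I /\
  forall J, fn_proper_ideal S J -> I `<=` J -> J = I.

Definition fn_fixed_ideal (I : set (X -> R)) : Prop :=
  exists x : X, forall f, I f -> f x = 0.

Definition ZCcF : set (set X) := [set Z | exists2 f, CcF f & Z = zero_set f].

Definition ZcF_filter (F : set (set X)) : Prop :=
  [/\ F !=set0, F `<=` ZCcF, ~ F set0,
      (forall A B, F A -> F B -> F (A `&` B)) &
      (forall A B, F A -> ZCcF B -> A `<=` B -> F B)].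

Definition ZcF_ultrafilter (F : set (set X)) : Prop :=
  ZcF_filter F /\ forall G, ZcF_filter G -> F `<=` G -> G = F.

Definition fixed_filter (F : set (set X)) : Prop :=
  exists x : X, forall A, F A -> A x.

End CcF.

(* When X is finite every function has finite support, and in a T1 space a
   finitely supported function has an open zero set, countable range and no
   discontinuity off its support; so both rings consist of all functions.
   An ideal without common zero then contains a sum of squares vanishing
   nowhere, i.e. a unit, and a filter without common point contains the
   empty set as a finite intersection.  When X is infinite, the finitely
   supported functions form a proper ideal and the cofinite sets a
   (Z_c)_F-filter, neither fixed; Zorn's lemma enlarges them to a free
   maximal ideal and a free ultrafilter. *)

From HB Require Import structures.
From mathcomp Require Import all_boot all_order all_algebra.
From mathcomp Require Import all_classical all_reals all_analysis.
Import numFieldNormedType.Exports.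
Import Order.TTheory GRing.Theory Num.Theory.
Local Open Scope classical_set_scope.
Local Open Scope ring_scope.
Set Implicit Arguments. Unset Strict Implicit.

Section FiniteSupport.
Variables (X : topologicalType) (R : realType) (f : X -> R).
Hypothesis supp_f : finite_set (~` zero_set f).

Lemma finite_support_bounded : exists M : R, forall x, `|f x| <= M.
Proof.
have [B suppE] := finite_fsetP.1 supp_f.
exists (\big[Num.max/0]_(y <- finmap.enum_fset B) `|f y|) => x.
have [fx0|fx_neq0] := pselect (f x = 0).
  by rewrite fx0 normr0 bigmax_ge_id.
apply: (le_bigmax_seq _ x) => //; have : (~` zero_set f) x by [].
by rewrite suppE.
Qed.

Lemma finite_support_countable_range : countable (range f).
Proof.
apply/finite_set_countable/(@sub_finite_set _ _ ((f @` ~` zero_set f) `|` [set 0])).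
  move=> _ [x _ <-]; have [fx0|fx_neq0] := pselect (f x = 0); first by right.
  by left; exists x.
by rewrite finite_setU; split; [exact: finite_image | exact: finite_set1].
Qed.

Lemma finite_support_discont : accessible_space X -> discont f `<=` ~` zero_set f.
Proof.
move=> T1 x f_discont fx0; apply: f_discont.
have zero_set_open : open (zero_set f).
  by rewrite -(setCK (zero_set f)) openC; exact: accessible_finite_set_closed.1.
exact/(near_cst_continuous 0)/open_nbhs_nbhs.
Qed.

Lemma finite_support_CcF_star : accessible_space X -> CcF_star f.
Proof.
move=> T1; split; last exact: finite_support_bounded.
split; first exact: finite_support_countable_range.
exact: sub_finite_set (finite_support_discont T1) supp_f.
Qed.

End FiniteSupport.

Section FiniteSpace.
Variables (X : topologicalType) (R : realType).

Lemma finite_setT_enum : finite_set [set: X] -> exists s : seq X, forall x, x \in s.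
Proof.
move=> /finite_fsetP[B BE]; exists (finmap.enum_fset B) => x.
by have : [set: X] x by []; rewrite BE.
Qed.

Lemma fn_ideal_pos_on (S I : set (X -> R)) : fn_ideal S I ->
  (forall x, exists2 h, I h & h x != 0) ->
  forall s : seq X, exists g, [/\ I g, forall y, 0 <= g y & {in s, forall y, 0 < g y}].
Proof.
move=> [IS I0 Iadd _ Imul] witness; elim=> [|a s [g [Ig g_ge0 g_gt0]]].
  by exists (fun=> 0); split.
have [h Ih ha] := witness a.
have Ihh : I (h \* h) by exact: Imul (IS _ Ih) Ih.
exists (g \+ h \* h); split=> [|y|y]; first exact: Iadd.
  by rewrite /= -expr2 addr_ge0 ?sqr_ge0.
rewrite in_cons /= -expr2 => /predU1P[->|ys].
  by rewrite ltr_wpDl // exprn_even_gt0.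
by rewrite ltr_wpDr ?sqr_ge0 ?g_gt0.
Qed.

Lemma not_fixed_ideal_witness (I : set (X -> R)) :
  ~ fn_fixed_ideal I -> forall x, exists2 h, I h & h x != 0.
Proof.
move=> I_free x; apply: contrapT => nx; apply: I_free; exists x => h Ih.
by apply: contrapT => /eqP hx; apply: nx; exists h.
Qed.

Lemma proper_ideal_fixed_on_finite (S I : set (X -> R)) :
  finite_set [set: X] -> (forall f, S f) -> fn_proper_ideal S I -> fn_fixed_ideal I.
Proof.
move=> /finite_setT_enum[s sT] Sall [idI I1]; apply: contrapT => I_free.
have [g [Ig _ g_gt0]] := fn_ideal_pos_on idI (not_fixed_ideal_witness I_free) s.
apply: I1.
have -> : (fun=> 1) = (fun y => (g y)^-1) \* g.
  by apply/funext => y /=; rewrite mulVf // gt_eqF ?g_gt0.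
by case: idI => _ _ _ _; apply.
Qed.

Lemma ZcF_filter_avoid (F : set (set X)) : ZcF_filter (R := R) F ->
  (forall x, exists2 A, F A & ~ A x) ->
  forall s : seq X, exists2 A, F A & {in s, forall y, ~ A y}.
Proof.
move=> [[A0 FA0] _ _ FI _] witness; elim=> [|a s [A FA As]]; first by exists A0.
have [B FB Ba] := witness a.
exists (A `&` B); first exact: FI.
by move=> y; rewrite in_cons => /predU1P[-> [] //|ys [Ay _]]; exact: As ys Ay.
Qed.

Lemma not_fixed_filter_witness (F : set (set X)) :
  ~ fixed_filter F -> forall x, exists2 A, F A & ~ A x.
Proof.
move=> F_free x; apply: contrapT => nx; apply: F_free; exists x => A FA.
by apply: contrapT => nAx; apply: nx; exists A.
Qed.

Lemma ZcF_filter_fixed_on_finite (F : set (set X)) :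
  finite_set [set: X] -> ZcF_filter (R := R) F -> fixed_filter F.
Proof.
move=> /finite_setT_enum[s sT] FF; apply: contrapT => F_free.
have [A FA As] := ZcF_filter_avoid FF (not_fixed_filter_witness F_free) s.
have A_empty : A = set0 by apply/seteqP; split=> // y /(As y (sT y)).
by case: FF => _ _ + _ _; rewrite -A_empty.
Qed.

End FiniteSpace.

Lemma Zorn_bigcup_ext T (Q : set (set T)) (A0 : set T) : Q A0 ->
  (forall C : set (set T), C `<=` Q -> C !=set0 -> total_on C subset ->
     Q (\bigcup_(J in C) J)) ->
  exists A, [/\ Q A, A0 `<=` A & forall B, Q B -> A `<=` B -> B = A].
Proof.
move=> QA0 Qchain.
(* [set0] is adjoined so that the empty chain has an upper bound. *)
pose P := [set J : set T | J = set0 \/ Q J /\ A0 `<=` J].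
have [|A [PA Amax]] := Zorn_bigcup (P := P).
  move=> F FP Ftot; pose F' := [set J | F J /\ J !=set0].
  have F'Q J : F' J -> Q J /\ A0 `<=` J.
    by move=> [/FP[-> [] //|//] _].
  have -> : \bigcup_(J in F) J = \bigcup_(J in F') J.
    apply/seteqP; split=> x [J FJ Jx]; exists J => //; last exact: FJ.1.
    by split=> //; exists x.
  have [[J F'J]|F'0] := pselect (F' !=set0); last first.
    by left; apply/seteqP; split=> // x [J F'J _]; apply: F'0; exists J.
  right; split; last by move=> x /(F'Q _ F'J).2 Jx; exists J.
  apply: Qchain; [by move=> K /F'Q[] | by exists J | ].
  by move=> K L [FK _] [FL _]; exact: Ftot.
have [QA A0A] : Q A /\ A0 `<=` A.
  case: PA => [A_empty|//]; subst A.
  have [[x A0x]|A0_empty] := pselect (A0 !=set0).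
    exfalso; apply: (Amax A0); last by right; split.
    by rewrite properEneq; split=> //; apply/eqP => /seteqP[_ /(_ x A0x)].
  have A0E : A0 = set0 by apply/seteqP; split=> // x A0x; apply: A0_empty; exists x.
  by rewrite -A0E; split.
exists A; split=> // B QB AB; apply: contrapT => BA.
apply: (Amax B); last by right; split=> //; exact: subset_trans AB.
by rewrite properEneq; split=> //; apply/eqP => AB'; apply: BA.
Qed.

Section InfiniteSpace.
Variables (X : topologicalType) (R : realType).

Lemma proper_ideal_bigcup (S : set (X -> R)) (C : set (set (X -> R))) :
  C `<=` fn_proper_ideal S -> C !=set0 -> total_on C subset ->
  fn_proper_ideal S (\bigcup_(J in C) J).
Proof.
move=> CI [J0 CJ0] Ctot; split; last by move=> [J /CI[_]].
have idC J : C J -> fn_ideal S J by move=> /CI[].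
split.
- by move=> f [J /idC[JS _ _ _ _] /JS].
- by exists J0 => //; case: (idC _ CJ0).
- move=> f g [J CJ Jf] [K CK Kg].
  have [JK|KJ] := Ctot _ _ CJ CK.
    by exists K => //; case: (idC _ CK) => _ _ + _ _; apply; [exact: JK|].
  by exists J => //; case: (idC _ CJ) => _ _ + _ _; apply; [|exact: KJ].
- by move=> f [J CJ Jf]; exists J => //; case: (idC _ CJ) => _ _ _ + _; apply.
- by move=> f g Sg [J CJ Jf]; exists J => //; case: (idC _ CJ) => _ _ _ _; apply.
Qed.

Lemma ZcF_filter_bigcup (C : set (set (set X))) :
  C `<=` ZcF_filter (R := R) -> C !=set0 -> total_on C subset ->
  ZcF_filter (R := R) (\bigcup_(J in C) J).
Proof.
move=> CF [J0 CJ0] Ctot; split.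
- by case: (CF _ CJ0) => -[A J0A] _ _ _ _; exists A, J0.
- by move=> A [J /CF[_ + _ _ _]]; apply.
- by move=> [J /CF[_ _ + _ _]].
- move=> A B [J CJ JA] [K CK KB].
  have [JK|KJ] := Ctot _ _ CJ CK.
    by exists K => //; case: (CF _ CK) => _ _ _ + _; apply; [exact: JK|].
  by exists J => //; case: (CF _ CJ) => _ _ _ + _; apply; [|exact: KJ].
- move=> A B [J CJ JA] ZB AB; exists J => //.
  by case: (CF _ CJ) => _ _ _ _ Jup; exact: Jup JA ZB AB.
Qed.

Lemma zero_set_indic (A : set X) : zero_set (\1_A : X -> R) = ~` A.
Proof.
apply/seteqP; split=> x; rewrite /zero_set /= indicE.
  by move=> /eqP; rewrite pnatr_eq0 eqb0 notin_setE.
by move=> nAx; rewrite memNset.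
Qed.

Lemma finite_support_proper_ideal (S : set (X -> R)) :
  (forall f, finite_set (~` zero_set f) -> S f) -> ~ finite_set [set: X] ->
  fn_proper_ideal S [set f | finite_set (~` zero_set f)].
Proof.
move=> Sfin Xinf; split; last first.
  by apply: contra_not Xinf; apply: sub_finite_set => x _ /=; rewrite /zero_set /=;
    apply/eqP; rewrite oner_eq0.
split=> //=.
- by apply: sub_finite_set (finite_set0 X) => x; apply.
- move=> f g f_fin g_fin.
  apply: (@sub_finite_set _ _ (~` zero_set f `|` ~` zero_set g)); last first.
    by rewrite finite_setU.
  move=> x fgx; apply: contrapT => /not_orP[/contrapT fx /contrapT gx].
  by apply: fgx; rewrite /zero_set /= fx gx addr0.
- move=> f; apply: sub_finite_set => x /=; rewrite /zero_set /=.
  by apply: contra_not => ->; rewrite oppr0.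
- move=> f g _; apply: sub_finite_set => x /=; rewrite /zero_set /=.
  by apply: contra_not => ->; rewrite mulr0.
Qed.

Lemma cofinite_ZcF_filter : accessible_space X -> ~ finite_set [set: X] ->
  ZcF_filter (R := R) [set A : set X | finite_set (~` A)].
Proof.
move=> T1 Xinf; split=> //=.
- by exists setT; rewrite /= setCT; exact: finite_set0.
- move=> A A_cofin; exists (\1_(~` A)); last by rewrite zero_set_indic setCK.
  by apply: (finite_support_CcF_star _ T1).1; rewrite zero_set_indic setCK.
- by rewrite setC0.
- by move=> A B A_cofin B_cofin; rewrite setCI finite_setU.
- by move=> A B A_cofin _ AB; apply: sub_finite_set A_cofin; exact: subsetC.
Qed.

Lemma free_maximal_ideal (S : set (X -> R)) :
  (forall f, finite_set (~` zero_set f) -> S f) -> ~ finite_set [set: X] ->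
  exists I, fn_maximal_ideal S I /\ ~ fn_fixed_ideal I.
Proof.
move=> Sfin Xinf.
have [I [I_proper finI Imax]] :=
  Zorn_bigcup_ext (finite_support_proper_ideal Sfin Xinf) (@proper_ideal_bigcup S).
exists I; split=> // -[x Ix].
have /Ix : I \1_[set x].
  by apply: finI; rewrite /= zero_set_indic setCK; exact: finite_set1.
by rewrite indicE mem_set //= => /eqP; rewrite oner_eq0.
Qed.

Lemma free_ZcF_ultrafilter : accessible_space X -> ~ finite_set [set: X] ->
  exists F : set (set X), ZcF_ultrafilter (R := R) F /\ ~ fixed_filter F.
Proof.
move=> T1 Xinf.
have [F [F_filter cofinF Fmax]] :=
  Zorn_bigcup_ext (cofinite_ZcF_filter T1 Xinf) ZcF_filter_bigcup.
exists F; split=> // -[x Fx].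
have /Fx : F (~` [set x]) by apply: cofinF; rewrite /= setCK; exact: finite_set1.
by apply.
Qed.

End InfiniteSpace.

Section Characterisation.
Variables (X : topologicalType) (R : realType).

Lemma finite_iff_fixed_ideals (S : set (X -> R)) :
  (forall f, finite_set (~` zero_set f) -> S f) ->
  (finite_set [set: X] <-> forall I, fn_proper_ideal S I -> fn_fixed_ideal I) /\
  (finite_set [set: X] <-> forall I, fn_maximal_ideal S I -> fn_fixed_ideal I).
Proof.
move=> Sfin.
have fin_fixed : finite_set [set: X] -> forall I, fn_proper_ideal S I -> fn_fixed_ideal I.
  move=> Xfin I; apply: proper_ideal_fixed_on_finite => // f.
  by apply: Sfin; exact: sub_finite_set Xfin.
have fixed_fin : (forall I, fn_maximal_ideal S I -> fn_fixed_ideal I) ->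
    finite_set [set: X].
  move=> fixed; apply: contrapT => /(free_maximal_ideal Sfin)[I [/fixed]] //.
split; split=> [Xfin I|fixed].
- exact: fin_fixed.
- by apply: fixed_fin => I [/fixed].
- by move=> [/(fin_fixed Xfin)].
- exact: fixed_fin.
Qed.

Lemma finite_iff_fixed_ZcF_filters : accessible_space X ->
  (finite_set [set: X] <->
     forall F : set (set X), ZcF_filter (R := R) F -> fixed_filter F) /\
  (finite_set [set: X] <->
     forall F : set (set X), ZcF_ultrafilter (R := R) F -> fixed_filter F).
Proof.
move=> T1.
have fixed_fin : (forall F : set (set X), ZcF_ultrafilter (R := R) F -> fixed_filter F) ->
    finite_set [set: X].
  by move=> fixed; apply: contrapT => /(free_ZcF_ultrafilter R T1)[F [/fixed]].
split; split=> [Xfin F|fixed].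
- exact: ZcF_filter_fixed_on_finite.
- by apply: fixed_fin => F [/fixed].
- by move=> [/(ZcF_filter_fixed_on_finite Xfin)].
- exact: fixed_fin.
Qed.

End Characterisation.

Theorem theorem3p13 (X : topologicalType) (R : realType)
  (hT1 : @accessible_space X) :
  let P1 := finite_set [set: X] in
  let P2 := forall I, fn_proper_ideal (@CcF X R) I -> fn_fixed_ideal I in
  let P2s := forall I, fn_proper_ideal (@CcF_star X R) I -> fn_fixed_ideal I in
  let P3 := forall I, fn_maximal_ideal (@CcF X R) I -> fn_fixed_ideal I in
  let P3s := forall I, fn_maximal_ideal (@CcF_star X R) I -> fn_fixed_ideal I in
  let P4 := forall F : set (set X), ZcF_filter (R := R) F -> fixed_filter F in
  let P5 := forall F : set (set X), ZcF_ultrafilter (R := R) F -> fixed_filter F in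
  (P1 <-> P2) /\ (P1 <-> P2s) /\ (P1 <-> P3) /\ (P1 <-> P3s) /\
  (P1 <-> P4) /\ (P1 <-> P5).
Proof.
move=> P1 P2 P2s P3 P3s P4 P5.
have CcF_star_fin (f : X -> R) : finite_set (~` zero_set f) -> CcF_star f.
  by move=> f_fin; exact: finite_support_CcF_star.
have CcF_fin (f : X -> R) : finite_set (~` zero_set f) -> CcF f.
  by move=> /CcF_star_fin[].
have [P12 P13] := finite_iff_fixed_ideals CcF_fin.
have [P12s P13s] := finite_iff_fixed_ideals CcF_star_fin.
have [P14 P15] := finite_iff_fixed_ZcF_filters R hT1.
by [].
Qed.
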